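(* Let $(\Gamma,\lambda)$ be a tree plan. For every $B\subseteq\Gamma(\omega)$, the model-theoretic algebraic closure of $B$ in the $\mathcal{L}_\Gamma$-structure $\Gamma(\omega)$ equals $\mathrm{tcl}(B)$.
   Context: Tree plans: a tree plan is a pair $(\Gamma,\lambda)$ where $\Gamma\subseteq\omega^{<\omega}$ is a finite set of finite sequences containing the empty sequence $\langle\rangle$ and closed under initial segments, and $\lambda:\Gamma\to\{1,\infty\}$ with $\lambda(\langle\rangle)=1$. $\Gamma(\omega)$ is the set of finite sequences $\langle(i_0,t_0),\dots,(i_n,t_n)\rangle$ (including the empty one) such that $\langle i_0,\dots,i_n\rangle\in\Gamma$ and for each $k\le n$: $t_k=\star$ (a fixed symbol not in $\omega$) if $\lambda(\langle i_0,\dots,i_k\rangle)=1$, and $t_k\in\omega$ if $\lambda(\langle i_0,\dots,i_k\rangle)=\infty$. It is a tree under the initial-segment order $\le$, in the language $\mathcal{L}_t$ with $\le$, root constant $\varepsilon$ (the empty sequence), meet $\sqcap$ and $\mathtt{pred}$ (delete last entry; $\mathtt{pred}(\varepsilon)=\varepsilon$). The map $\pi:\Gamma(\omega)\to\Gamma$ sends $\langle(i_0,t_0),\dots,(i_n,t_n)\rangle$ to $\langle i_0,\dots,i_n\rangle$. $\mathcal{L}_\Gamma$ is $\mathcal{L}_t$ plus unary predicates $P_\sigma$ ($\sigma\in\Gamma$) with $P_\sigma=\pi^{-1}(\sigma)$. Tree closure: for $B\subseteq\Gamma(\omega)$, $\mathrm{tcl}(B)$ is the smallest subset of $\Gamma(\omega)$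 containing $\varepsilon$ and every $a\le b$ with $b\in B$, such that whenever $a$ is in it, $a'\ne\varepsilon$, $\mathtt{pred}(a')=a$ and $\lambda(\pi(a'))=1$, then $a'$ is in it. *)

From Stdlib Require Import List Arith PeanoNat.
Import ListNotations.

(* A node of Gamma(omega): sequence of pairs (i_k, t_k); t_k = None is the
   symbol star, t_k = Some n is n in omega. *)
Definition entry := (nat * option nat)%type.
Definition node := list entry.

Definition entry_eq_dec : forall x y : entry, {x = y} + {x <> y}.
Proof. decide equality; [decide equality; apply Nat.eq_dec | apply Nat.eq_dec]. Defined.

(* Gamma given as a finite list of finite sequences; lambda : true = infinity,
   false = 1. *)
Definition tree_plan (Gam : list (list nat)) (lam : list nat -> bool) : Prop :=
  In [] Gam /\
  (forall s n, In s Gam -> In (firstn n s) Gam) /\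
  lam [] = false.

Definition piG (a : node) : list nat := map fst a.

Definition inGw (Gam : list (list nat)) (lam : list nat -> bool) (a : node) : Prop :=
  In (piG a) Gam /\
  forall k, k < length a ->
    (snd (nth k a (0, None)) = None <-> lam (firstn (S k) (piG a)) = false).

Definition init_seg (a b : node) : Prop := exists u, b = a ++ u.

Fixpoint meet (a b : node) : node :=
  match a, b with
  | x :: a', y :: b' => if entry_eq_dec x y then x :: meet a' b' else []
  | _, _ => []
  end.

Definition predn (a : node) : node := removelast a.

Inductive term : Type :=
| TVar : nat -> term
| TEps : term
| TMeet : term -> term -> term
| TPred : term -> term.

Inductive form : Type :=
| FFalse : form
| FEq : term -> term -> form
| FLe : term -> term -> form
| FP : list nat -> term -> form
| FNot : form -> form
| FAnd : form -> form -> form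
| FOr : form -> form -> form
| FImp : form -> form -> form
| FEx : form -> form
| FAll : form -> form.

Fixpoint teval (env : nat -> node) (t : term) : node :=
  match t with
  | TVar n => env n
  | TEps => []
  | TMeet s u => meet (teval env s) (teval env u)
  | TPred s => predn (teval env s)
  end.

Definition scons (x : node) (env : nat -> node) : nat -> node :=
  fun n => match n with 0 => x | S k => env k end.

Fixpoint sat (Gam : list (list nat)) (lam : list nat -> bool)
    (env : nat -> node) (f : form) : Prop :=
  match f with
  | FFalse => False
  | FEq s u => teval env s = teval env u
  | FLe s u => init_seg (teval env s) (teval env u)
  | FP sg s => piG (teval env s) = sg
  | FNot g => ~ sat Gam lam env g
  | FAnd g h => sat Gam lam env g /\ sat Gam lam env h
  | FOr g h => sat Gam lam env g \/ sat Gam lam env h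
  | FImp g h => sat Gam lam env g -> sat Gam lam env h
  | FEx g => exists x, inGw Gam lam x /\ sat Gam lam (scons x env) g
  | FAll g => forall x, inGw Gam lam x -> sat Gam lam (scons x env) g
  end.

(* Parameter environment: variable 0 is the free variable x, variable k+1 is
   the k-th parameter (unused variables default to the 0-definable root). *)
Definition penv (x : node) (bs : list node) : nat -> node :=
  scons x (fun k => nth k bs []).

Definition acl (Gam : list (list nat)) (lam : list nat -> bool)
    (B : node -> Prop) (a : node) : Prop :=
  inGw Gam lam a /\
  exists (phi : form) (bs : list node),
    (forall b, In b bs -> B b) /\
    sat Gam lam (penv a bs) phi /\
    exists l : list node,
      forall x, inGw Gam lam x -> sat Gam lam (penv x bs) phi -> In x l.

Inductive tcl (Gam : list (list nat)) (lam : list nat -> bool)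
    (B : node -> Prop) : node -> Prop :=
| tcl_root : tcl Gam lam B []
| tcl_below : forall a b, B b -> init_seg a b -> tcl Gam lam B a
| tcl_succ : forall a a', tcl Gam lam B a -> inGw Gam lam a' -> a' <> [] ->
    predn a' = a -> lam (piG a') = false -> tcl Gam lam B a'.

From Stdlib Require Import List PeanoNat Lia Classical FinFun.
Import ListNotations.

(* Inclusion tcl(B) <= acl(B): every node a of tcl(B) consists of an initial
   segment of a parameter b (or of the root) followed by a run of star entries,
   so a is the unique node with projection pi(a) whose j-th predecessor lies
   below b; this is expressed by one L_Gamma-formula with parameter b.

   Inclusion acl(B) <= tcl(B): a node a outside tcl(B) has a first prefix
   c ++ [(i, n)] outside tcl(B); its last entry is valued (lambda = infinity).
   For every value m not used by a parameter at that depth, exchanging the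
   subtree above c ++ [(i, n)] with the one above c ++ [(i, m)] is an
   automorphism of the L_Gamma-structure fixing all parameters; hence every
   formula satisfied by a is satisfied by infinitely many distinct nodes. *)

Definition node_eq_dec : forall x y : node, {x = y} + {x <> y} :=
  list_eq_dec entry_eq_dec.

Lemma firstn_app_length (A : Type) n (l1 l2 : list A) :
  length l1 = n -> firstn n (l1 ++ l2) = l1.
Proof. intros <-; rewrite firstn_app, Nat.sub_diag, firstn_O, firstn_all, app_nil_r; reflexivity. Qed.

Lemma skipn_app_length (A : Type) n (l1 l2 : list A) :
  length l1 = n -> skipn n (l1 ++ l2) = l2.
Proof. intros <-; rewrite skipn_app, Nat.sub_diag, skipn_all; reflexivity. Qed.

Lemma init_refl a : init_seg a a.
Proof. exists []; rewrite app_nil_r; reflexivity. Qed.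

Lemma init_trans a b c : init_seg a b -> init_seg b c -> init_seg a c.
Proof. intros [u ->] [v ->]; exists (u ++ v); rewrite app_assoc; reflexivity. Qed.

Lemma init_nil a : init_seg [] a.
Proof. exists a; reflexivity. Qed.

Lemma init_length a b : init_seg a b -> length a <= length b.
Proof. intros [u ->]; rewrite length_app; lia. Qed.

Lemma init_firstn n a : init_seg (firstn n a) a.
Proof. exists (skipn n a); symmetry; apply firstn_skipn. Qed.

Lemma init_firstn_eq a b : init_seg a b -> firstn (length a) b = a.
Proof. intros [u ->]; apply firstn_app_length; reflexivity. Qed.

Lemma init_same_length a b x :
  init_seg a x -> init_seg b x -> length a = length b -> a = b.
Proof.
  intros Ha Hb Hl.
  rewrite <- (init_firstn_eq _ _ Ha), <- (init_firstn_eq _ _ Hb), Hl; reflexivity.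
Qed.

Lemma init_antisym a b : init_seg a b -> init_seg b a -> a = b.
Proof.
  intros Hab Hba. apply (init_same_length a b b Hab (init_refl b)).
  apply init_length in Hab; apply init_length in Hba; lia.
Qed.

Lemma init_snoc x c e : init_seg x (c ++ [e]) -> length x <= length c -> init_seg x c.
Proof.
  intros H Hl. apply init_firstn_eq in H.
  rewrite firstn_app, (proj2 (Nat.sub_0_le _ _) Hl), firstn_O, app_nil_r in H.
  rewrite <- H; apply init_firstn.
Qed.

Lemma meet_l a b : init_seg (meet a b) a.
Proof.
  revert b; induction a as [|x a IH]; intros [|y b]; simpl; try apply init_nil.
  destruct (entry_eq_dec x y); [|apply init_nil].
  destruct (IH b) as [u Hu]; exists u; simpl; rewrite <- Hu; reflexivity.
Qed.

Lemma meet_r a b : init_seg (meet a b) b.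
Proof.
  revert b; induction a as [|x a IH]; intros [|y b]; simpl; try apply init_nil.
  destruct (entry_eq_dec x y) as [<-|]; [|apply init_nil].
  destruct (IH b) as [u Hu]; exists u; simpl; rewrite <- Hu; reflexivity.
Qed.

Lemma meet_greatest z a b : init_seg z a -> init_seg z b -> init_seg z (meet a b).
Proof.
  revert a b; induction z as [|e z IH]; intros a b; [intros; apply init_nil|].
  intros [u ->] [v ->]; simpl.
  destruct (entry_eq_dec e e) as [_|n]; [|contradiction].
  destruct (IH (z ++ u) (z ++ v) (ex_intro _ u eq_refl) (ex_intro _ v eq_refl)) as [w Hw].
  exists w; simpl; rewrite Hw; reflexivity.
Qed.

Lemma predn_init x : init_seg (predn x) x.
Proof.
  destruct x as [|e x]; [apply init_nil|].
  exists [last (e :: x) (0, None)]. apply app_removelast_last; discriminate.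
Qed.

Lemma predn_length x : length (predn x) = length x - 1.
Proof. unfold predn; rewrite removelast_firstn_len, length_firstn; lia. Qed.

Section Automorphism.
Variables (Gam : list (list nat)) (lam : list nat -> bool) (f : node -> node).
Hypotheses (f_involutive : forall x, f (f x) = x)
  (f_length : forall x, length (f x) = length x)
  (f_mono : forall x y, init_seg x y -> init_seg (f x) (f y))
  (f_piG : forall x, piG (f x) = piG x)
  (f_inGw : forall x, inGw Gam lam x -> inGw Gam lam (f x)).

(* The root is the only node of length 0, hence fixed. *)
Lemma f_nil : f [] = [].
Proof. apply length_zero_iff_nil; rewrite f_length; reflexivity. Qed.

Lemma f_mono_iff x y : init_seg x y <-> init_seg (f x) (f y).
Proof.
  split; [apply f_mono|]. intros H; apply f_mono in H.
  rewrite !f_involutive in H; exact H.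
Qed.

Lemma f_meet a b : f (meet a b) = meet (f a) (f b).
Proof.
  apply init_antisym.
  - apply meet_greatest; apply f_mono; [apply meet_l | apply meet_r].
  - rewrite <- (f_involutive (meet (f a) (f b))). apply f_mono.
    rewrite <- (f_involutive a), <- (f_involutive b) at 2.
    apply meet_greatest; apply f_mono; [apply meet_l | apply meet_r].
Qed.

Lemma f_predn a : f (predn a) = predn (f a).
Proof.
  apply (init_same_length _ _ (f a)).
  - apply f_mono, predn_init.
  - apply predn_init.
  - rewrite f_length, !predn_length, f_length; reflexivity.
Qed.

Lemma teval_auto env env' :
  (forall n, env' n = f (env n)) -> forall t, teval env' t = f (teval env t).
Proof.
  intros H t; induction t as [n| |t1 IH1 t2 IH2|t IH]; simpl.
  - apply H.
  - symmetry; apply f_nil.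
  - rewrite IH1, IH2, f_meet; reflexivity.
  - rewrite IH, f_predn; reflexivity.
Qed.

Lemma env_auto_scons x y env env' : y = f x ->
  (forall n, env' n = f (env n)) -> forall n, scons y env' n = f (scons x env n).
Proof. intros -> H [|n]; simpl; auto. Qed.

(* Invariance of satisfaction; the quantifier cases use that f is a bijection
   of Gamma(omega) (being an involution preserving it). *)
Lemma sat_auto phi : forall env env', (forall n, env' n = f (env n)) ->
  (sat Gam lam env phi <-> sat Gam lam env' phi).
Proof.
  induction phi as [|t u|t u|sg t|g IH|g IHg h IHh|g IHg h IHh|g IHg h IHh|g IH|g IH];
    intros env env' H; simpl; rewrite ?(teval_auto env env' H).
  - tauto.
  - split; [intros ->; reflexivity|].
    intros E. rewrite <- (f_involutive (teval env t)), E, f_involutive; reflexivity.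
  - apply f_mono_iff.
  - rewrite f_piG; tauto.
  - rewrite (IH env env' H); tauto.
  - rewrite (IHg env env' H), (IHh env env' H); tauto.
  - rewrite (IHg env env' H), (IHh env env' H); tauto.
  - rewrite (IHg env env' H), (IHh env env' H); tauto.
  - split.
    + intros [x [Hx Hs]]. exists (f x); split; [auto|].
      apply (IH (scons x env)); [apply env_auto_scons; auto | exact Hs].
    + intros [y [Hy Hs]]. exists (f y); split; [auto|].
      apply (IH (scons (f y) env) (scons y env')); [|exact Hs].
      apply env_auto_scons; auto.
  - split.
    + intros Hall y Hy. apply (IH (scons (f y) env) (scons y env')); [|auto].
      apply env_auto_scons; auto.
    + intros Hall x Hx. apply (IH (scons x env) (scons (f x) env')); auto.
      apply env_auto_scons; auto.
Qed.
End Automorphism.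

Definition is_valued (o : option nat) : bool :=
  match o with None => false | Some _ => true end.

Definition shape (x : node) : list (nat * bool) :=
  map (fun e : entry => (fst e, is_valued (snd e))) x.

Lemma shape_piG x : piG x = map fst (shape x).
Proof. unfold piG, shape; rewrite map_map; reflexivity. Qed.

Lemma shape_length x : length (shape x) = length x.
Proof. apply length_map. Qed.

Lemma shape_nth k x :
  snd (nth k (shape x) (0, false)) = is_valued (snd (nth k x (0, None))).
Proof. revert k; induction x as [|e x IH]; intros [|k]; simpl; auto. Qed.

Lemma inGw_shape Gam lam x y : shape x = shape y -> inGw Gam lam x -> inGw Gam lam y.
Proof.
  intros Hs [Hpi Hstar].
  assert (Epi : piG x = piG y) by (rewrite !shape_piG, Hs; reflexivity).
  assert (Elen : length x = length y) by (rewrite <- !shape_length, Hs; reflexivity).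
  split; [rewrite <- Epi; exact Hpi|].
  intros k Hk. rewrite <- Epi, <- (Hstar k ltac:(lia)).
  assert (Ev : is_valued (snd (nth k x (0, None))) = is_valued (snd (nth k y (0, None))))
    by (rewrite <- !shape_nth, Hs; reflexivity).
  destruct (snd (nth k x (0, None))), (snd (nth k y (0, None))); simpl in Ev;
    split; congruence.
Qed.

Section SiblingSwap.
Variables (c : node) (e1 e2 : entry).
Hypotheses (e12 : e1 <> e2) (same_shape : shape [e1] = shape [e2]).

Let u1 := c ++ [e1].
Let u2 := c ++ [e2].
Let q := S (length c).

Definition exch (w : node) : node :=
  if node_eq_dec w u1 then u2 else if node_eq_dec w u2 then u1 else w.

Definition swap (x : node) : node :=
  if Nat.leb q (length x) then exch (firstn q x) ++ skipn q x else x.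

Lemma siblings_distinct : u1 <> u2.
Proof. intros H; apply app_inv_head in H; injection H; exact e12. Qed.

Lemma u_length : length u1 = q /\ length u2 = q.
Proof. unfold u1, u2, q; rewrite !length_app; simpl; lia. Qed.

Lemma exch_length w : length (exch w) = length w.
Proof.
  destruct u_length as [L1 L2]. unfold exch.
  destruct node_eq_dec as [->|]; [congruence|].
  destruct node_eq_dec as [->|]; congruence.
Qed.

Lemma exch_involutive w : exch (exch w) = w.
Proof.
  assert (H := siblings_distinct). unfold exch at 2.
  destruct (node_eq_dec w u1) as [->|]; [|destruct (node_eq_dec w u2) as [->|]];
    unfold exch; repeat destruct node_eq_dec; congruence.
Qed.

Lemma exch_shape w : shape (exch w) = shape w.
Proof.
  assert (Hu : shape u1 = shape u2)
    by (unfold u1, u2, shape in *; rewrite !map_app, same_shape; reflexivity).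
  unfold exch. destruct node_eq_dec as [->|]; [auto|].
  destruct node_eq_dec as [->|]; auto.
Qed.

Lemma swap_length x : length (swap x) = length x.
Proof.
  unfold swap; destruct (Nat.leb_spec q (length x)); [|reflexivity].
  rewrite length_app, exch_length, <- length_app, firstn_skipn; reflexivity.
Qed.

Lemma swap_involutive x : swap (swap x) = x.
Proof.
  assert (L := swap_length x). unfold swap at 1. rewrite L. unfold swap.
  destruct (Nat.leb_spec q (length x)); [|reflexivity].
  assert (Lq : length (exch (firstn q x)) = q)
    by (rewrite exch_length, length_firstn; lia).
  rewrite firstn_app_length, skipn_app_length, exch_involutive, firstn_skipn by exact Lq.
  reflexivity.
Qed.

Lemma swap_shape x : shape (swap x) = shape x.
Proof.
  unfold swap; destruct (Nat.leb_spec q (length x)); [|reflexivity].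
  unfold shape at 1; rewrite map_app. fold (shape (exch (firstn q x))) (shape (skipn q x)).
  rewrite exch_shape. unfold shape; rewrite <- map_app, firstn_skipn; reflexivity.
Qed.

(* A node shorter than the siblings lying below one of them lies below c,
   hence below both. *)
Lemma exch_above_short x w : length x < q -> init_seg x w -> init_seg x (exch w).
Proof.
  intros Hx Hw. unfold exch.
  destruct node_eq_dec as [->|]; [|destruct node_eq_dec as [->|]; [|exact Hw]];
    (eapply init_trans; [apply (init_snoc _ _ _ Hw); unfold q in Hx; lia
                        | eexists; reflexivity]).
Qed.

Lemma swap_mono x y : init_seg x y -> init_seg (swap x) (swap y).
Proof.
  intros [v ->]. unfold swap. rewrite length_app.
  destruct (Nat.leb_spec q (length x)).
  - destruct (Nat.leb_spec q (length x + length v)); [|lia].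
    rewrite firstn_app, skipn_app, (proj2 (Nat.sub_0_le _ _) H), firstn_O, app_nil_r.
    exists v; rewrite app_assoc; reflexivity.
  - destruct (Nat.leb_spec q (length x + length v)); [|exists v; reflexivity].
    eapply init_trans; [|eexists; reflexivity].
    apply exch_above_short; [exact H|].
    rewrite firstn_app, firstn_all2 by lia. eexists; reflexivity.
Qed.

Lemma swap_outside b : ~ init_seg u1 b -> ~ init_seg u2 b -> swap b = b.
Proof.
  intros H1 H2. unfold swap. destruct (Nat.leb_spec q (length b)); [|reflexivity].
  unfold exch. destruct node_eq_dec as [E|].
  { exfalso; apply H1; rewrite <- E; apply init_firstn. }
  destruct node_eq_dec as [E|].
  { exfalso; apply H2; rewrite <- E; apply init_firstn. }
  apply firstn_skipn.
Qed.

Lemma swap_inside w : swap (u1 ++ w) = u2 ++ w.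
Proof.
  destruct u_length as [L1 _]. unfold swap. rewrite length_app, L1.
  destruct (Nat.leb_spec q (q + length w)); [|lia].
  rewrite firstn_app_length, skipn_app_length by exact L1.
  unfold exch; destruct node_eq_dec; [reflexivity | congruence].
Qed.

Lemma swap_moves_solution Gam lam phi bs w :
  (forall b, In b bs -> ~ init_seg u1 b /\ ~ init_seg u2 b) ->
  inGw Gam lam (u1 ++ w) -> sat Gam lam (penv (u1 ++ w) bs) phi ->
  inGw Gam lam (u2 ++ w) /\ sat Gam lam (penv (u2 ++ w) bs) phi.
Proof.
  intros Hbs Hx Hsat. rewrite <- swap_inside.
  assert (Hsw : forall x, inGw Gam lam x -> inGw Gam lam (swap x))
    by (intros x; apply inGw_shape; rewrite swap_shape; reflexivity).
  split; [auto|].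
  refine (proj1 (sat_auto Gam lam swap swap_involutive swap_length swap_mono _ Hsw
                   phi _ _ _) Hsat).
  - intros x; rewrite !shape_piG, swap_shape; reflexivity.
  - intros [|j]; [reflexivity|]. unfold penv; simpl.
    destruct (nth_in_or_default j bs []) as [Hin | ->]; [|reflexivity].
    symmetry; apply swap_outside; apply Hbs; exact Hin.
Qed.
End SiblingSwap.

Definition star_from (a : node) (j : nat) : Prop :=
  forall k, j <= k -> k < length a -> snd (nth k a (0, None)) = None.

Lemma piG_length x : length (piG x) = length x.
Proof. apply length_map. Qed.

Lemma piG_nth k x : fst (nth k x (0, None)) = nth k (piG x) 0.
Proof. revert k; induction x as [|e x IH]; intros [|k]; simpl; auto. Qed.

Lemma inGw_prefix Gam lam (HT : tree_plan Gam lam) a b :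
  inGw Gam lam b -> init_seg a b -> inGw Gam lam a.
Proof.
  intros [Hpi Hstar] [u ->]. destruct HT as [_ [Hclosed _]].
  assert (Pa : piG (a ++ u) = piG a ++ piG u) by apply map_app.
  assert (La : length (piG a) = length a) by apply piG_length.
  split.
  - specialize (Hclosed _ (length (piG a)) Hpi).
    rewrite Pa, firstn_app_length in Hclosed by reflexivity; exact Hclosed.
  - intros k Hk. specialize (Hstar k ltac:(rewrite length_app; lia)).
    rewrite app_nth1, Pa, firstn_app, (proj2 (Nat.sub_0_le (S k) (length (piG a))))
      , firstn_O, app_nil_r in Hstar by lia.
    exact Hstar.
Qed.

Section TreeClosure.
Variables (Gam : list (list nat)) (lam : list nat -> bool) (B : node -> Prop).
Hypotheses (HT : tree_plan Gam lam) (HB : forall b, B b -> inGw Gam lam b).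

Lemma tcl_inGw a : tcl Gam lam B a -> inGw Gam lam a.
Proof.
  induction 1 as [| a b Hb Hab | a a' _ _ Ha' _ _ _].
  - split; [apply HT | simpl; intros; lia].
  - exact (inGw_prefix Gam lam HT a b (HB b Hb) Hab).
  - exact Ha'.
Qed.

Lemma tcl_description a : tcl Gam lam B a ->
  exists b j, (b = [] \/ B b) /\ j <= length a /\ init_seg (firstn j a) b /\ star_from a j.
Proof.
  induction 1 as [| a b Hb Hab | a a' _ [b [j [Hb [Hj [Hjb Hstar]]]]] Ha' Hne Hpred Hlam].
  - exists [], 0; repeat split; auto using init_refl. intros k _ Hk; simpl in Hk; lia.
  - exists b, (length a); repeat split; auto. rewrite firstn_all; exact Hab.
    intros k Hk Hk'; lia.
  - destruct (exists_last Hne) as [a0 [e ->]].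
    unfold predn in Hpred; rewrite removelast_last in Hpred; subst a0.
    rewrite length_app in *; simpl in *.
    exists b, j; repeat split; auto; [lia| |].
    + rewrite firstn_app, (proj2 (Nat.sub_0_le j (length a)) Hj), firstn_O, app_nil_r.
      exact Hjb.
    + intros k Hk Hk'. destruct (Nat.lt_ge_cases k (length a)).
      * rewrite app_nth1 by lia. apply Hstar; lia.
      * destruct Ha' as [_ Ha'].
        assert (Hlast := Ha' k Hk'). rewrite length_app in Hk'; simpl in Hk'.
        rewrite firstn_all2 in Hlast by (rewrite piG_length, length_app; simpl; lia).
        apply Hlast, Hlam.
Qed.
End TreeClosure.

Lemma determined_by_prefix Gam lam a x j :
  inGw Gam lam a -> inGw Gam lam x -> piG x = piG a ->
  firstn j x = firstn j a -> star_from a j -> x = a.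
Proof.
  intros [_ Ha] [_ Hx] Hpi Hfirst Hstar.
  assert (L : length x = length a) by (rewrite <- !piG_length, Hpi; reflexivity).
  apply nth_ext with (d := (0, None)) (d' := (0, None)); [exact L|].
  intros k Hk. destruct (Nat.lt_ge_cases k j).
  - rewrite <- (firstn_skipn j x), <- (firstn_skipn j a), Hfirst, !app_nth1;
      [reflexivity | rewrite length_firstn; lia ..].
  - assert (Sa : snd (nth k a (0, None)) = None) by (apply Hstar; lia).
    assert (Sx : snd (nth k x (0, None)) = None).
    { apply (Hx k Hk). rewrite Hpi. apply (Ha k ltac:(lia)), Sa. }
    assert (Fst : fst (nth k x (0, None)) = fst (nth k a (0, None)))
      by (rewrite !piG_nth, Hpi; reflexivity).
    destruct (nth k x (0, None)), (nth k a (0, None)); simpl in *; congruence.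
Qed.

Fixpoint predd (d : nat) (t : term) : term :=
  match d with 0 => t | S d => TPred (predd d t) end.

Lemma teval_predd env d :
  teval env (predd d (TVar 0)) = firstn (length (env 0) - d) (env 0).
Proof.
  induction d as [|d IH]; simpl.
  - rewrite Nat.sub_0_r, firstn_all; reflexivity.
  - rewrite IH. unfold predn.
    rewrite removelast_firstn_len, firstn_firstn, length_firstn. f_equal; lia.
Qed.

Definition below_formula (sg : list nat) (d : nat) : form :=
  FAnd (FP sg (TVar 0)) (FLe (predd d (TVar 0)) (TVar 1)).

Lemma sat_below_formula Gam lam x bs sg d :
  sat Gam lam (penv x bs) (below_formula sg d) <->
  piG x = sg /\ init_seg (firstn (length x - d) x) (nth 0 bs []).
Proof. simpl; rewrite teval_predd; reflexivity. Qed.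

(* tcl(B) <= acl(B): a node of tcl(B) is the only solution of a below_formula
   whose parameter is the root or an element of B. *)
Lemma tcl_in_acl Gam lam (HT : tree_plan Gam lam) B
  (HB : forall b, B b -> inGw Gam lam b) a :
  tcl Gam lam B a -> acl Gam lam B a.
Proof.
  intros Ha. assert (HaG := tcl_inGw Gam lam B HT HB a Ha).
  destruct (tcl_description Gam lam B a Ha) as [b [j [Hb [Hj [Hjb Hstar]]]]].
  assert (Hparam : exists bs, (forall y, In y bs -> B y) /\ nth 0 bs [] = b).
  { destruct Hb as [-> | Hb]; [exists [] | exists [b]];
      (split; [simpl; intros y Hy; intuition congruence | reflexivity]). }
  destruct Hparam as [bs [HbsB Hnth]].
  split; [exact HaG|]. exists (below_formula (piG a) (length a - j)), bs.
  split; [exact HbsB|]. split.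
  - apply sat_below_formula. rewrite Hnth. split; [reflexivity|].
    replace (length a - (length a - j)) with j by lia. exact Hjb.
  - exists [a]. intros x Hx Hsat. apply sat_below_formula in Hsat as [Hpi Hxb].
    assert (L : length x = length a) by (rewrite <- !piG_length, Hpi; reflexivity).
    rewrite L, Hnth in Hxb. replace (length a - (length a - j)) with j in Hxb by lia.
    left; symmetry. apply (determined_by_prefix Gam lam a x j); auto.
    apply (init_same_length _ _ b); auto. rewrite !length_firstn; lia.
Qed.

Lemma first_failure (P : nat -> Prop) n :
  P 0 -> ~ P n -> exists k, k < n /\ P k /\ ~ P (S k).
Proof.
  intros H0; induction n as [|n IH]; intros Hn; [contradiction|].
  destruct (classic (P n)) as [Hp | Hp].
  - exists n; auto.
  - destruct (IH Hp) as [k [Hk HPk]]; exists k; split; [lia | exact HPk].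
Qed.

Lemma firstn_S_nth (a : node) k :
  k < length a -> firstn (S k) a = firstn k a ++ [nth k a (0, None)].
Proof.
  revert k; induction a as [|e a IH]; intros [|k] Hk; simpl in *; try lia; auto.
  rewrite IH by lia; reflexivity.
Qed.

Lemma boundary_entry_valued Gam lam (HT : tree_plan Gam lam) B a k :
  inGw Gam lam a -> k < length a ->
  tcl Gam lam B (firstn k a) -> ~ tcl Gam lam B (firstn (S k) a) ->
  exists i n, nth k a (0, None) = (i, Some n).
Proof.
  intros Ha Hk Hin Hout.
  destruct (nth k a (0, None)) as [i [n|]] eqn:He; [eauto|exfalso].
  apply Hout, (tcl_succ _ _ _ (firstn k a)); [exact Hin | | | |].
  - exact (inGw_prefix Gam lam HT _ a Ha (init_firstn _ _)).
  - intros E; apply (f_equal (@length _)) in E. rewrite firstn_length_le in E by lia; discriminate.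
  - apply removelast_firstn, Hk.
  - unfold piG; rewrite <- firstn_map. apply (proj2 Ha k Hk). rewrite He; reflexivity.
Qed.

Lemma fresh_values n (es : list entry) :
  exists N, n <= N /\ forall i m, In (i, Some m) es -> m <= N.
Proof.
  induction es as [|[i0 [m0|]] es [N [HnN HN]]].
  - exists n; split; [lia | intros i m []].
  - exists (max N m0); split; [lia|].
    intros i m [E | Hin]; [injection E; lia | specialize (HN i m Hin); lia].
  - exists N; split; [exact HnN|]. intros i m [E | Hin]; [discriminate | exact (HN i m Hin)].
Qed.

Lemma injective_tail_not_in_list (A : Type) (h : nat -> A) N (l : list A) :
  Injective h -> (forall m, N < m -> In (h m) l) -> False.
Proof.
  intros Hinj Hl.
  assert (Hnd : NoDup (map h (seq (S N) (S (length l)))))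
    by (apply Injective_map_NoDup; [exact Hinj | apply seq_NoDup]).
  assert (Hincl : incl (map h (seq (S N) (S (length l)))) l).
  { intros y Hy. apply in_map_iff in Hy as [m [<- Hm]]. apply in_seq in Hm. apply Hl; lia. }
  apply (NoDup_incl_length Hnd) in Hincl. rewrite length_map, length_seq in Hincl. lia.
Qed.

(* A non-member of tcl(B) leaves tcl(B) through a valued entry (i, n); swapping
   the subtree above it with the sibling subtree (i, m) for every fresh value m
   produces infinitely many distinct solutions of any formula it satisfies. *)
Lemma acl_in_tcl Gam lam (HT : tree_plan Gam lam) B a :
  acl Gam lam B a -> tcl Gam lam B a.
Proof.
  intros [Ha [phi [bs [HbsB [Hsat [l Hl]]]]]]. apply NNPP; intros Hna.
  destruct (first_failure (fun j => tcl Gam lam B (firstn j a)) (length a))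
    as [k [Hk [Hin Hout]]]; [apply tcl_root | rewrite firstn_all; exact Hna |].
  destruct (boundary_entry_valued Gam lam HT B a k Ha Hk Hin Hout) as [i [n He]].
  assert (Lc : length (firstn k a) = k) by (apply firstn_length_le; lia).
  assert (Ha_split : a = (firstn k a ++ [(i, Some n)]) ++ skipn (S k) a)
    by (rewrite <- He, <- firstn_S_nth, firstn_skipn by exact Hk; reflexivity).
  destruct (fresh_values n (map (fun b => nth k b (0, None)) bs)) as [N [HnN HN]].
  apply (injective_tail_not_in_list _
           (fun m => (firstn k a ++ [(i, Some m)]) ++ skipn (S k) a) N l).
  { intros m1 m2 E. apply app_inv_tail, app_inv_head in E. injection E; auto. }
  intros m Hm.
  assert (Hparams : forall b, In b bs ->
            ~ init_seg (firstn k a ++ [(i, Some n)]) b /\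
            ~ init_seg (firstn k a ++ [(i, Some m)]) b).
  { intros b Hb; split; intros Hab.
    - apply Hout. rewrite firstn_S_nth, He by exact Hk.
      exact (tcl_below _ _ _ _ b (HbsB b Hb) Hab).
    - assert (Hbk : nth k b (0, None) = (i, Some m)).
      { destruct Hab as [u ->].
        rewrite <- app_assoc, app_nth2, Lc, Nat.sub_diag by lia; reflexivity. }
      assert (m <= N) by (apply (HN i m), in_map_iff; exists b; auto). lia. }
  rewrite Ha_split in Ha, Hsat.
  destruct (swap_moves_solution (firstn k a) (i, Some n) (i, Some m)
              ltac:(intros E; injection E; lia) eq_refl Gam lam phi bs (skipn (S k) a)
              Hparams Ha Hsat) as [HG Hs].
  apply Hl; assumption.
Qed.

Theorem mainTheorem17 (Gam : list (list nat)) (lam : list nat -> bool)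
  (HT : tree_plan Gam lam) (B : node -> Prop)
  (HB : forall b, B b -> inGw Gam lam b) :
  forall a : node, acl Gam lam B a <-> tcl Gam lam B a.
Proof.
  intros a; split; [apply acl_in_tcl | apply tcl_in_acl]; assumption.
Qed.
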